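(* Let $n\ge 3$, let $F$ be a set of edges of $Q_n$, and let $T$ be a proper subset of the vertex set of $Q_n$ with $|T|\ge 3$ and $|T|_0\ge|T|_1$, such that every edge of $Q_n$ joining a vertex of parity 0 in $T$ to a vertex outside $T$ belongs to $F$. If the subgraph of $Q_n$ induced by $T$ has a vertex of degree 1, then either $F$ is not minimal, or there is a proper subset $T'\subsetneq T$ which is disconnected halfway with respect to the same set $F$.
   Context: $Q_n$ is the $n$-dimensional hypercube on the binary strings of length $n$, two strings adjacent iff they differ in exactly one bit. The parity of a vertex is the number of ones in its label modulo 2. For a set $T$ of vertices, $|T|_0$ and $|T|_1$ denote the numbers of vertices of parity 0 and parity 1 in $T$. $F$ is a set of ''faulty'' edges; $Q_n-F$ is the graph with all vertices of $Q_n$ and the edges of $Q_n$ not in $F$. ''$F$ is not minimal'' means that there is a proper subset $F'\subsetneq F$ such that $Q_n-F'$ has no Hamiltonian cycle. A nonempty proper subset $T$ of the vertices of $Q_n$ is disconnected halfway (with respect to $F$) if either (1) $|T|_0\ge |T|_1$ and every edge joining a vertex of parity 0 in $T$ to a vertex outside $T$ is in $F$, or (2) $|T|_1\ge |T|_0$ and every edge joining a vertex of parity 1 in $T$ to a vertex outside $T$ is in $F$. *)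

From mathcomp Require Import all_boot.
Set Implicit Arguments. Unset Strict Implicit. Unset Printing Implicit Defensive.

Definition vtx (n : nat) := {ffun 'I_n -> bool}.

Definition hdist n (x y : vtx n) : nat := #|[set i | x i != y i]|.
Definition qadj n (x y : vtx n) : bool := hdist x y == 1.

Definition parity n (x : vtx n) : bool := odd #|[set i | x i]|.

Definition is_edge n (e : {set vtx n}) : bool :=
  [exists x, exists y, qadj x y && (e == [set x; y])].

Definition cnt_par n (T : {set vtx n}) (b : bool) : nat :=
  #|[set x in T | parity x == b]|.

(* Q_n - F has a Hamiltonian cycle: a cyclic ordering of all vertices in
   which consecutive vertices are adjacent via an edge not in F. *)
Definition hamiltonian n (F : {set {set vtx n}}) : Prop :=
  exists s : seq (vtx n),
    [/\ uniq s, size s = #|[set: vtx n]| &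
        cycle (fun x y => qadj x y && ([set x; y] \notin F)) s].

Definition not_minimal n (F : {set {set vtx n}}) : Prop :=
  exists F' : {set {set vtx n}}, F' \proper F /\ ~ hamiltonian F'.

Definition cut_in n (F : {set {set vtx n}}) (T : {set vtx n}) (b : bool) : Prop :=
  forall x y : vtx n, x \in T -> parity x = b -> y \notin T -> qadj x y ->
    [set x; y] \in F.

Definition disconnected_halfway n (F : {set {set vtx n}}) (T : {set vtx n}) : Prop :=
  [/\ T != set0, T \proper [set: vtx n] &
      (cnt_par T true <= cnt_par T false /\ cut_in F T false) \/
      (cnt_par T false <= cnt_par T true /\ cut_in F T true)].

Definition ind_deg n (T : {set vtx n}) (x : vtx n) : nat :=
  #|[set y in T | qadj x y]|.

From mathcomp Require Import all_boot.
From mathcomp Require Import zify.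
Set Implicit Arguments. Unset Strict Implicit.

(* Let y be the unique neighbour of x inside T. Adjacent vertices have opposite
   parities, so the edge {x, y} contains one vertex of each parity. If x has
   parity 0, then T' = {x, y} works: the only parity-0 vertex x of T' leaves T'
   only through edges leaving T. If x has parity 1, then T' = T \ {x, y} works:
   both parity counts drop by one, and a parity-0 vertex of T' can be adjacent
   neither to x (whose only neighbour in T is y) nor to the parity-0 vertex y. *)

Lemma qadj_sym n (x y : vtx n) : qadj x y = qadj y x.
Proof.
rewrite /qadj /hdist; suff -> : [set i | x i != y i] = [set i | y i != x i] by [].
by apply/setP=> i; rewrite !inE eq_sym.
Qed.

Lemma parity_qadj n (x y : vtx n) : qadj x y -> parity y = ~~ parity x.
Proof.
rewrite /qadj /hdist => /cards1P [i0 diff_i0].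
have neq_xy i : (x i != y i) = (i == i0) by rewrite -in_set1 -diff_i0 inE.
have flip_i0 : y i0 = ~~ x i0.
  by move: (neq_xy i0); rewrite eqxx; case: (x i0); case: (y i0).
have same_off_i0 : [set i | x i] :\ i0 = [set i | y i] :\ i0.
  apply/setP=> i; rewrite !inE; case: eqVneq => [//|ne_i] /=.
  by apply/eqP; move: (neq_xy i); rewrite (negbTE ne_i) => /negbFE.
rewrite /parity (cardsD1 i0 [set i | x i]) (cardsD1 i0 [set i | y i]).
by rewrite same_off_i0 !inE flip_i0 !oddD; case: (x i0); case: (odd #|_|).
Qed.

Lemma qadj_neq n (x y : vtx n) : qadj x y -> x != y.
Proof.
by move/parity_qadj => pyx; apply/eqP=> exy; move: pyx; rewrite exy; case: (parity y).
Qed.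

Lemma cnt_par_edge n (x y : vtx n) b : qadj x y -> cnt_par [set x; y] b = 1.
Proof.
move=> xy; have pyx := parity_qadj xy; have nxy := qadj_neq xy.
apply/eqP/cards1P; exists (if parity x == b then x else y).
apply/setP=> w; rewrite !inE.
case: (eqVneq w x) => [->|w_ne_x] /=; first by case: ifP; rewrite ?eqxx ?(negbTE nxy).
case: (eqVneq w y) => [->|w_ne_y]; last by case: ifP => _; apply/esym/negbTE.
by rewrite pyx; case: (parity x); case: b; rewrite ?eqxx //; apply/esym/negbTE; rewrite eq_sym.
Qed.

Lemma cnt_parD n (T S : {set vtx n}) b :
  S \subset T -> cnt_par T b = cnt_par (T :\: S) b + cnt_par S b.
Proof.
move=> sST; rewrite /cnt_par -cardsUI.
have -> : [set w in T :\: S | parity w == b] :&: [set w in S | parity w == b] = set0.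
  by apply/setP=> w; rewrite !inE; case: (w \in S); rewrite ?andbF.
rewrite cards0 addn0; apply: eq_card => w; rewrite !inE.
by case wS: (w \in S); rewrite ?(subsetP sST w wS) ?orbF.
Qed.

Lemma disconnected_halfway_sub n (F : {set {set vtx n}}) (T T' : {set vtx n}) :
  T \proper [set: vtx n] -> T' \subset T -> T' != set0 ->
  cnt_par T' true <= cnt_par T' false -> cut_in F T' false ->
  disconnected_halfway F T'.
Proof. by move=> prT sT'T nz cnt cut; split=> //; [exact: sub_proper_trans prT | left]. Qed.

Section UniqueNeighbour.

Variables (n : nat) (F : {set {set vtx n}}) (T : {set vtx n}) (x y : vtx n).
Hypothesis cutT : cut_in F T false.
Hypothesis xT : x \in T.
Hypothesis neighbours_x : [set w in T | qadj x w] = [set y].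

Lemma neighbour_unique w : w \in T -> qadj x w -> w = y.
Proof. by move=> wT xw; apply/set1P; rewrite -neighbours_x inE wT. Qed.

Lemma neighbour_in : y \in T.
Proof. by have := set11 y; rewrite -neighbours_x inE => /andP []. Qed.

Lemma neighbour_adj : qadj x y.
Proof. by have := set11 y; rewrite -neighbours_x inE => /andP []. Qed.

Lemma cut_in_edge : parity x = false -> cut_in F [set x; y] false.
Proof.
move=> px z w; rewrite !inE => /orP [] /eqP -> pz; last first.
  by rewrite (parity_qadj neighbour_adj) px in pz.
move=> /norP [_ w_ne_y] xw; apply: cutT => //.
by apply: contraNN w_ne_y => wT; rewrite (neighbour_unique wT xw).
Qed.

Lemma cut_in_remove_edge : parity x = true -> cut_in F (T :\: [set x; y]) false.
Proof.
move=> px z w; rewrite !inE negb_or => /andP [/andP [z_ne_x z_ne_y] zT] pz.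
case wT: (w \in T); last by move=> _ zw; apply: cutT; rewrite ?wT.
rewrite andbT negbK => /orP [] /eqP -> zw.
- by rewrite qadj_sym in zw; rewrite (neighbour_unique zT zw) eqxx in z_ne_y.
- by move: (parity_qadj zw); rewrite pz (parity_qadj neighbour_adj) px.
Qed.

End UniqueNeighbour.

Theorem lemma4 (n : nat) (F : {set {set vtx n}}) (T : {set vtx n}) :
  3 <= n ->
  (forall e, e \in F -> is_edge e) ->
  T \proper [set: vtx n] ->
  3 <= #|T| ->
  cnt_par T true <= cnt_par T false ->
  cut_in F T false ->
  (exists x, x \in T /\ ind_deg T x = 1) ->
  not_minimal F \/
  exists T' : {set vtx n}, T' \proper T /\ disconnected_halfway F T'.
Proof.
move=> _ _ prT T_ge3 cntT cutT [x [xT /eqP /cards1P [y neighbours_x]]]; right.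
have yT := neighbour_in neighbours_x; have xy := neighbour_adj neighbours_x.
have edge_sub : [set x; y] \subset T by rewrite subUset !sub1set xT yT.
have edge_card : #|[set x; y]| = 2 by rewrite cards2 qadj_neq.
case px: (parity x).
- exists (T :\: [set x; y]).
  have cardD : #|T :\: [set x; y]| = #|T| - 2.
    by rewrite cardsD (setIidPr edge_sub) edge_card.
  split; first by rewrite properEcard subsetDl cardD; lia.
  apply: (disconnected_halfway_sub prT); first exact: subsetDl.
  + by apply/set0Pn/card_gt0P; rewrite cardD; lia.
  + move: cntT; rewrite (cnt_parD true edge_sub) (cnt_parD false edge_sub).
    by rewrite !cnt_par_edge // leq_add2r.
  + exact: cut_in_remove_edge cutT neighbours_x px.
- exists [set x; y]; split; first by rewrite properEcard edge_sub edge_card; lia.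
  apply: (disconnected_halfway_sub prT edge_sub).
  + by apply/set0Pn; exists x; rewrite !inE eqxx.
  + by rewrite !cnt_par_edge.
  + exact: cut_in_edge cutT xT neighbours_x px.
Qed.
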